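(* Let $n$ be a non-negative integer and let $a,b$ be integers with $\gcd(a,b)=1$, $b\neq 0$ and $b\neq\pm1$. Let $T_N(a,b)=\sum_{k=0}^{\lfloor N/2\rfloor}\binom{N}{k}\binom{N-k}{k}a^k b^{N-2k}$ (the generalized central trinomial coefficient, i.e. the coefficient of $x^N$ in $(x^2+bx+a)^N$). Then $$\omega_b\big(T_{2n}(a,b)\big)=\omega_b\Big(\binom{2n}{n}\Big),\qquad \omega_b\big(T_{2n+1}(a,b)\big)=1+\omega_b\Big((2n+1)\binom{2n}{n}\Big).$$
   Context: For an integer $x$ with $x\neq 0,\pm1$ and a nonzero integer $y$, $\omega_x(y)$ denotes the largest non-negative integer $e$ such that $x^e$ divides $y$. *)

From mathcomp Require Import all_boot all_order all_algebra.
Set Implicit Arguments. Unset Strict Implicit. Unset Printing Implicit Defensive.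
Import Order.TTheory GRing.Theory Num.Theory.
Local Open Scope ring_scope.

(* omega x y : the largest e such that x^e divides y (intended for
   x <> 0, +-1 and y <> 0).  In that case |x|^e <= |y| forces e <= |y|,
   so the bounded maximum below is exactly the largest such e. *)
Definition omega (x y : int) : nat :=
  \max_(e < `|y|%N.+1 | (x ^+ e %| y)%Z) (e : nat).

Definition T (N : nat) (a b : int) : int :=
  \sum_(k < N./2.+1) ('C(N, k) * 'C(N - k, k))%:Z * a ^+ k * b ^+ (N - 2 * k).

From mathcomp Require Import all_boot all_order all_algebra.
From mathcomp Require Import zify ring.
Import Order.TTheory GRing.Theory Num.Theory.

(* Write N = 2n + d with d <= 1 and D = C(N,n) C(N-n,n), which is C(2n,n) or
   (2n+1) C(2n,n).  The last summand D a^n b^d of T_N(a,b) is exactly divisible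
   by b^(e + d), e = omega_b D, because a is prime to b.  The summand of index
   k = n - j, j >= 1, has coefficient c with c C(2j+d,j) C(j+d,j) = D C(n,k)^2,
   and by Legendre's formula the p-adic valuation of C(2j+d,j) C(j+d,j) is at
   most 2j - 1: each of the terms floor((2j+d)/p^i) - 2 floor(j/p^i) is at most
   1 and they vanish for i >= 2j.  Comparing valuations at each prime p of b
   then gives b^(e+1) | c b^(2j), so the other summands are all divisible by
   b^(e + d + 1). *)

Lemma logn_leq_dvdn d m : 0 < d -> 0 < m ->
  (forall p, prime p -> logn p d <= logn p m) -> d %| m.
Proof.
move=> d_gt0 m_gt0 le_logn; apply/dvdn_partP => // p.
by rewrite mem_primes => /and3P[p_pr _ _]; rewrite p_part pfactor_dvdn ?le_logn.
Qed.

Lemma logn_fact_trunc p n K : prime p -> n < p ^ K ->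
  logn p n`! = \sum_(1 <= i < K) n %/ p ^ i.
Proof.
move=> p_pr n_lt; have p_gt1 := prime_gt1 p_pr.
have widen a c : (forall i, a <= i -> n < p ^ i) -> a <= c ->
    \sum_(1 <= i < a) n %/ p ^ i = \sum_(1 <= i < c) n %/ p ^ i.
  move=> small le_ac; rewrite (big_nat_widen _ _ _ _ _ le_ac) big_mkcond /=.
  by apply: eq_bigr => i _; case: ltnP => // /small/divn_small->.
rewrite logn_fact //; case: (leqP n.+1 K) => [le_nK | lt_Kn].
  by apply: widen => // i lt_ni; exact: leq_trans lt_ni (ltnW (ltn_expl i p_gt1)).
symmetry; apply: widen (ltnW lt_Kn) => i le_Ki.
by rewrite (leq_trans n_lt) // leq_pexp2l // ltnW.
Qed.

Lemma double_lt_exp2 j : 0 < j -> j.*2.+1 < 2 ^ j.*2.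
Proof.
elim: j => [//|[|j] IH] _ //.
by move: (IH isT); rewrite !doubleS !expnS; lia.
Qed.

Lemma divn_leq_double q M j : 0 < q -> M <= j.*2.+1 -> M %/ q <= 1 + 2 * (j %/ q).
Proof.
move=> q_gt0 le_M; rewrite -ltnS ltn_divLR //.
have := divn_eq j q; have := ltn_pmod j q_gt0.
set x := j %/ q; set r := j %% q => lt_r def_j; nia.
Qed.

Lemma logn_fact_leq_double p j M : prime p -> 0 < j -> M <= j.*2.+1 ->
  logn p M`! <= (j.*2 - 1) + 2 * logn p j`!.
Proof.
move=> p_pr j_gt0 le_M; have p_gt0 := prime_gt0 p_pr.
have lt_exp x : x <= j.*2.+1 -> x < p ^ j.*2.
  have : 2 ^ j.*2 <= p ^ j.*2 by rewrite leq_exp2r ?prime_gt1 // double_gt0.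
  by have := double_lt_exp2 _ j_gt0; lia.
rewrite !(logn_fact_trunc p _ j.*2) ?lt_exp //; last by lia.
apply: (@leq_trans (\sum_(1 <= i < j.*2) (1 + 2 * (j %/ p ^ i)))).
  by apply: leq_sum => i _; apply: divn_leq_double; rewrite ?expn_gt0 ?p_gt0.
by rewrite big_split sum_nat_const_nat muln1 big_distrr.
Qed.

Definition trinom N k := 'C(N, k) * 'C(N - k, k).

Lemma trinom_gt0 N k : k.*2 <= N -> 0 < trinom N k.
Proof. by move=> le_kN; rewrite muln_gt0 !bin_gt0; apply/andP; split; lia. Qed.

Lemma trinom_fact N k : k.*2 <= N -> trinom N k * (k`! * k`! * (N - k.*2)`!) = N`!.
Proof.
move=> le_kN; rewrite -(bin_fact (_ : k <= N)); last by lia.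
rewrite -(bin_fact (_ : k <= N - k)); last by lia.
have -> : N - k - k = N - k.*2 by lia.
rewrite /trinom; ring.
Qed.

Lemma trinom_mul_bin N n k : k <= n -> n.*2 <= N ->
  trinom N n * 'C(n, k) ^ 2 = trinom N k * trinom (N - k.*2) (n - k).
Proof.
move=> le_kn le_nN.
have facts_gt0 : 0 < (k`! * (n - k)`!) ^ 2 * (N - n.*2)`!.
  by rewrite muln_gt0 expn_gt0 muln_gt0 !fact_gt0.
apply/eqP; rewrite -(eqn_pmul2r facts_gt0); apply/eqP.
transitivity N`!.
  by rewrite -(trinom_fact N n) // -(bin_fact le_kn); ring.
rewrite -(trinom_fact N k) ?(leq_trans _ le_nN) ?leq_double //.
rewrite -(trinom_fact (N - k.*2) (n - k)); last by lia.
have -> : N - k.*2 - (n - k).*2 = N - n.*2 by lia.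
ring.
Qed.

Lemma logn_trinom p N k : k.*2 <= N ->
  logn p (trinom N k) + (logn p k`! + logn p k`! + logn p (N - k.*2)`!) = logn p N`!.
Proof.
move=> le_kN; rewrite -(trinom_fact N k le_kN).
move: (trinom N k) (trinom_gt0 N k le_kN) => c c_gt0.
by rewrite !lognM ?muln_gt0 ?fact_gt0.
Qed.

Lemma logn_trinom_center p j d : prime p -> 0 < j -> d <= 1 ->
  logn p (trinom (j.*2 + d) j) <= j.*2 - 1.
Proof.
move=> p_pr j_gt0 le_d1.
have le_jd : j.*2 + d <= j.*2.+1 by lia.
have := logn_fact_leq_double p j _ p_pr j_gt0 le_jd.
rewrite -(logn_trinom p (j.*2 + d) j) ?leq_addr //; lia.
Qed.

Lemma logn_trinom_leq p N n k : prime p -> k < n -> n.*2 <= N <= n.*2.+1 ->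
  logn p (trinom N n) <= logn p (trinom N k) + ((n - k).*2 - 1).
Proof.
move=> p_pr lt_kn /andP[le_nN le_Nn].
have le_kN : k.*2 <= N by lia.
have le_jN : (n - k).*2 <= N - k.*2 by lia.
apply: (@leq_trans (logn p (trinom N n * 'C(n, k) ^ 2))).
  apply: dvdn_leq_log (dvdn_mulr _ (dvdnn _)).
  by rewrite muln_gt0 trinom_gt0 // expn_gt0 bin_gt0 ltnW.
rewrite trinom_mul_bin ?(ltnW lt_kn) // (lognM p (trinom_gt0 _ _ le_kN) (trinom_gt0 _ _ le_jN)).
have -> : N - k.*2 = (n - k).*2 + (N - n.*2) by lia.
by rewrite leq_add2l logn_trinom_center ?subn_gt0 //; lia.
Qed.

Lemma dvdn_trinom_exp B e N n k : 0 < B -> k < n -> n.*2 <= N <= n.*2.+1 ->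
  B ^ e %| trinom N n -> B ^ e.+1 %| trinom N k * B ^ (n - k).*2.
Proof.
move=> B_gt0 lt_kn le_N dvd_e.
have le_kN : k.*2 <= N by case/andP: le_N; lia.
have le_nN : n.*2 <= N by case/andP: le_N.
have Bexp_gt0 i : 0 < B ^ i by rewrite expn_gt0 B_gt0.
apply: logn_leq_dvdn; [exact: Bexp_gt0 | by rewrite muln_gt0 trinom_gt0 // Bexp_gt0 | move=> p p_pr].
have := logn_trinom_leq p N n k p_pr lt_kn le_N.
have := dvdn_leq_log p (trinom_gt0 _ _ le_nN) dvd_e.
rewrite (lognM p (trinom_gt0 _ _ le_kN) (Bexp_gt0 _)) !lognX.
set m := logn p B; have [->|m_gt0] := posnP m; first by rewrite !muln0.
set j := n - k; have j_gt0 : 0 < j by rewrite subn_gt0.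
have le_m : j.*2 - 1 <= (j.*2 - 1) * m by rewrite leq_pmulr.
have -> : j.*2 * m = (j.*2 - 1) * m + m.
  by rewrite -mulSnr subn1 prednK // double_gt0.
rewrite mulSn; lia.
Qed.

Local Open Scope ring_scope.

Definition exact_dvdz (b : int) (e : nat) (x : int) :=
  (b ^+ e %| x)%Z && ~~ (b ^+ e.+1 %| x)%Z.

Lemma exact_dvdz_neq0 {b e x} : exact_dvdz b e x -> x != 0.
Proof. by case/andP=> _; apply: contraNneq => ->; rewrite dvdz0. Qed.

Lemma omega_exact {b e x} : (1 < `|b|)%N -> exact_dvdz b e x -> omega b x = e.
Proof.
move=> b_gt1 ex; have x_gt0 : (0 < `|x|)%N by rewrite absz_gt0 (exact_dvdz_neq0 ex).
case/andP: ex => dvd_e ndvd_e.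
have lt_e : (e < `|x|.+1)%N.
  move: dvd_e; rewrite dvdzE abszX => /(dvdn_leq x_gt0).
  by have := ltn_expl e b_gt1; lia.
apply/eqP; rewrite eqn_leq; apply/andP; split.
  apply/bigmax_leqP => i dvd_i; rewrite leqNgt; apply: contra ndvd_e => lt_ei.
  exact: dvdz_trans (dvdz_exp2l b lt_ei) dvd_i.
exact: (leq_bigmax_cond (Ordinal lt_e)).
Qed.

Lemma exact_dvdz_omega {b x} : (1 < `|b|)%N -> x != 0 -> exact_dvdz b (omega b x) x.
Proof.
move=> b_gt1 x_neq0.
have ndvd_some : exists i, ~~ (b ^+ i %| x)%Z.
  exists `|x|%N; rewrite dvdzE abszX; apply: contraTN isT => /(dvdn_leq _).
  rewrite absz_gt0 x_neq0 => /(_ isT); rewrite leqNgt.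
  by rewrite (leq_trans (ltn_expl _ b_gt1)) // leq_exp2r ?absz_gt0 // ltnW.
case: (ex_minnP ndvd_some) => -[|e] ndvd_e min_e.
  by rewrite expr0 dvd1z in ndvd_e.
suff ex : exact_dvdz b e x by rewrite (omega_exact b_gt1 ex).
by rewrite /exact_dvdz ndvd_e andbT; apply: contraT => /min_e; rewrite ltnn.
Qed.

Lemma exact_dvdzD b e x y :
  exact_dvdz b e x -> (b ^+ e.+1 %| y)%Z -> exact_dvdz b e (x + y).
Proof.
case/andP=> dvd_x ndvd_x dvd_y; rewrite /exact_dvdz (rpredDr _ dvd_y) ndvd_x andbT.
by rewrite rpredD // (dvdz_trans (dvdz_exp2l b (leqnSn e))).
Qed.

Lemma exact_dvdzMr b e x c :
  coprimez b c -> exact_dvdz b e x -> exact_dvdz b e (x * c).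
Proof.
move=> cop_bc /andP[dvd_x ndvd_x].
by rewrite /exact_dvdz dvdz_mulr // Gauss_dvdzl // coprimezXl.
Qed.

Lemma exact_dvdzMX b e d x :
  b != 0 -> exact_dvdz b e x -> exact_dvdz b (e + d) (x * b ^+ d).
Proof.
move=> b_neq0; rewrite /exact_dvdz -addSn !exprD.
by rewrite !dvdz_mul2r // expf_neq0.
Qed.

Lemma T_exact_dvdz n d a b : (d <= 1)%N -> coprimez a b -> (1 < `|b|)%N ->
  exact_dvdz b (omega b (trinom (n.*2 + d) n) + d) (T (n.*2 + d) a b).
Proof.
move=> le_d1 cop_ab b_gt1.
have half_N : (n.*2 + d)./2 = n.
  by case: d le_d1 => [|[|//]] _; rewrite ?addn0 ?addn1 ?doubleK //= uphalf_double.
set N := (n.*2 + d)%N; set e := omega b _.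
have b_neq0 : b != 0 by rewrite -absz_gt0 ltnW.
have le_N : (n.*2 <= N <= n.*2.+1)%N by rewrite /N; lia.
have trinom_neq0 : (trinom N n)%:Z != 0.
  by rewrite -absz_gt0 absz_nat trinom_gt0 //; case/andP: le_N.
have ex_e : exact_dvdz b e (trinom N n) := exact_dvdz_omega b_gt1 trinom_neq0.
have /andP[dvd_e _] := ex_e.
rewrite /T half_N big_ord_recr /= addrC (_ : (N - 2 * n)%N = d); last by lia.
apply: exact_dvdzD.
  apply: exact_dvdzMX b_neq0 _; apply: exact_dvdzMr ex_e.
  by rewrite coprimezXr // coprimez_sym.
apply: rpred_sum => i _ /=.
rewrite (_ : (N - 2 * i)%N = ((n - i).*2 + d)%N); last by have := ltn_ord i; lia.
rewrite mulrAC exprD mulrA -addSn exprD; apply/dvdz_mulr/dvdz_mul => //.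
rewrite dvdzE abszM !abszX absz_nat; apply: dvdn_trinom_exp => //; first exact: ltnW.
by move: dvd_e; rewrite dvdzE abszX absz_nat.
Qed.

Theorem theorem8 (n : nat) (a b : int)
  (hab : coprimez a b) (hb0 : b != 0) (hb1 : b != 1) (hbm1 : b != -1) :
  [/\ T n.*2 a b != 0, T n.*2.+1 a b != 0,
      omega b (T n.*2 a b) = omega b ('C(n.*2, n))%:Z
    & omega b (T n.*2.+1 a b) = (1 + omega b ((n.*2.+1 * 'C(n.*2, n))%N)%:Z)%N].
Proof.
have b_gt1 : (1 < `|b|)%N by case: b {hab} hb0 hb1 hbm1 => [[|[|m]]|[|m]].
have trinom_even : trinom (n.*2 + 0) n = 'C(n.*2, n).
  by rewrite /trinom addn0 -{2}addnn addnK binn muln1.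
have trinom_odd : trinom (n.*2 + 1) n = (n.*2.+1 * 'C(n.*2, n))%N.
  have succ_n : (n.*2 + 1 - n)%N = n.+1 by lia.
  have le_n : (n <= n.*2 + 1)%N by lia.
  rewrite /trinom succ_n binSn -{1}(bin_sub le_n) succ_n mulnC addn1.
  by rewrite (mul_bin_diag n.*2.+1 n).
have := T_exact_dvdz n 0 a b isT hab b_gt1; have := T_exact_dvdz n 1 a b isT hab b_gt1.
rewrite trinom_even trinom_odd !addn0 !addn1 => ex_odd ex_even.
split; [exact: exact_dvdz_neq0 ex_even | exact: exact_dvdz_neq0 ex_odd | |].
- by rewrite (omega_exact b_gt1 ex_even).
- by rewrite (omega_exact b_gt1 ex_odd) add1n.
Qed.
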